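(* Let $G$ be a finite abelian group with $N = |G|$, let $A \subseteq G$, let $\Gamma$ be a finite set of characters of $G$, let $\delta > 0$, write $\psi = \psi_{\Gamma,\delta}$, and let $\rho > 0$. Then the number of $x \in A$ for which $(A \ast \psi)(x) \leq \rho$ is at most $\rho N$.
   Context: Sets are identified with indicator functions; $f \ast g(x) = \sum_y f(y)g(x-y)$; arguments of complex numbers lie in $(-\pi,\pi]$. For $\Gamma = \{\gamma_1,\dots,\gamma_d\}$ let $\|x\|_\Gamma = \max_j|\arg\gamma_j(x)|/(2\pi)$ ($\|x\|_\emptyset = 0$), $B_{\Gamma,t} = \{x : \|x\|_\Gamma \leq t\}$, $\widetilde{B}_{\Gamma,\delta}(x) = \int_0^\infty B_{\Gamma,t}(x)\delta^{-1}e^{-t/\delta}\,dt$, $\beta_{\Gamma,\delta} = \widetilde{B}_{\Gamma,\delta}/\sum_y \widetilde{B}_{\Gamma,\delta}(y)$, and $\psi_{\Gamma,\delta} = \beta_{\Gamma,\delta}\ast\beta_{\Gamma,\delta}$. *)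

From HB Require Import structures.
From mathcomp Require Import all_boot all_order all_algebra.
From mathcomp Require Import complex.
From mathcomp Require Import all_classical all_reals all_analysis.
Set Implicit Arguments. Unset Strict Implicit. Unset Printing Implicit Defensive.
Import Order.TTheory GRing.Theory Num.Theory.
Local Open Scope ring_scope.
Local Open Scope classical_set_scope.

Section Defs.
Variable R : realType.

(* Argument of a complex number, with values in (-pi, pi]. *)
Definition carg (z : R[i]) : R :=
  let a := complex.Re z in let b := complex.Im z in
  let r := Num.sqrt (a ^+ 2 + b ^+ 2) in
  if 0 <= b then acos (a / r) else - acos (a / r).

Variable G : finZmodType.

Definition is_character (g : G -> R[i]) : Prop :=
  (forall x y : G, g (x + y) = g x * g y) /\ (forall x : G, g x != 0).

Definition gnorm (Gam : seq (G -> R[i])) (x : G) : R :=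
  \big[Num.max/0]_(g <- Gam) (`|carg (g x)| / (2 * pi)).

Definition bohr (Gam : seq (G -> R[i])) (t : R) (x : G) : R :=
  if gnorm Gam x <= t then 1 else 0.

Definition bohr_smooth (Gam : seq (G -> R[i])) (delta : R) (x : G) : R :=
  fine (\int[lebesgue_measure]_(t in `[0%R, +oo[%classic)
          (bohr Gam t x * delta^-1 * expR (- (t / delta)))%:E)%E.

Definition beta_ (Gam : seq (G -> R[i])) (delta : R) (x : G) : R :=
  bohr_smooth Gam delta x / \sum_(y : G) bohr_smooth Gam delta y.

Definition gconv (f g : G -> R) (x : G) : R := \sum_(y : G) f y * g (x - y).

Definition psi_ (Gam : seq (G -> R[i])) (delta : R) : G -> R :=
  gconv (beta_ Gam delta) (beta_ Gam delta).

Definition ind (A : {set G}) (x : G) : R := if x \in A then 1 else 0.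

End Defs.

From Pilot Require Import Defs.
From HB Require Import structures.
From mathcomp Require Import all_boot all_order all_algebra.
From mathcomp Require Import complex.
From mathcomp Require Import all_classical all_reals all_analysis.
From mathcomp Require Import exponential_distribution.
From mathcomp Require Import ring.
Set Implicit Arguments.
Unset Strict Implicit.
Unset Printing Implicit Defensive.
Import Order.TTheory GRing.Theory Num.Theory.
Local Open Scope ring_scope.

(* Only three properties of beta = beta_{Gamma,delta} matter: it is
   nonnegative, sums to 1 and is symmetric (|arg| is invariant under
   inversion, and gamma(-x) = gamma(x)^-1 for a character).  For such a
   beta and psi = beta * beta, let S be the set of x in A with
   (A * psi)(x) <= rho.  Symmetry gives <1_S, 1_S * psi> = ||1_S * beta||^2,
   which by Cauchy-Schwarz is at least (sum (1_S * beta))^2 / N = |S|^2 / N,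
   while monotonicity of convolution bounds it by
   sum_{x in S} (A * psi)(x) <= rho |S|.  Hence |S| <= rho N. *)

Section ComplexArgument.
Variable R : realType.

Lemma carg1 : carg (1 : R[i]) = 0.
Proof. by rewrite /carg /= expr0n /= addr0 expr1n sqrtr1 divr1 lexx acos1. Qed.

Lemma normr_cargV (z : R[i]) : `|carg z^-1| = `|carg z|.
Proof.
case: z => a b; rewrite /carg /=.
set n := a ^+ 2 + b ^+ 2.
have [n0|nz] := eqVneq n 0.
  move/eqP: n0; rewrite /n paddr_eq0 ?sqr_ge0 // !sqrf_eq0 => /andP[/eqP-> /eqP->].
  by rewrite !mul0r oppr0.
have n_gt0 : 0 < n by rewrite lt0r nz addr_ge0 ?sqr_ge0.
have -> : Num.sqrt ((a / n) ^+ 2 + (- (b / n)) ^+ 2) = n^-1 * Num.sqrt n.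
  rewrite sqrrN !expr_div_n -mulrDl sqrtrM ?addr_ge0 ?sqr_ge0 //.
  by rewrite sqrtrV ?exprn_ge0 ?ltW // sqrtr_sqr ger0_norm ?invr_ge0 ?ltW // mulrC.
rewrite invfM invrK mulrA divfK ?gt_eqF //.
have -> : (0 <= - (b / n)) = (b <= 0) by rewrite oppr_ge0 pmulr_lle0 ?invr_gt0.
by have [] := ltrgt0P b; rewrite ?normrN.
Qed.

End ComplexArgument.

Section Characters.
Variables (R : realType) (G : finZmodType).

Lemma character0 (g : G -> R[i]) : is_character g -> g 0 = 1.
Proof.
move=> [gD gN0]; apply: (mulfI (gN0 0)).
by rewrite mulr1 -gD addr0.
Qed.

Lemma characterN (g : G -> R[i]) x : is_character g -> g (- x) = (g x)^-1.
Proof.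
move=> g_char; have := character0 g_char; case: g_char => gD gN0.
rewrite -(subrr x) gD => gxN.
by rewrite -[g (- x)](mulKf (gN0 x)) gxN mulr1.
Qed.

Variable Gam : seq (G -> R[i]).
Hypothesis Gam_char : forall g, g \in Gam -> is_character g.

Lemma gnorm0 : Defs.gnorm Gam 0 = 0.
Proof.
rewrite /Defs.gnorm; elim: Gam Gam_char => [|g l IH] l_char; first by rewrite big_nil.
rewrite big_cons IH => [|h hl]; last by apply: l_char; rewrite in_cons hl orbT.
by rewrite character0 ?carg1 ?normr0 ?mul0r ?maxxx //; apply: l_char; rewrite mem_head.
Qed.

Lemma gnormN x : Defs.gnorm Gam (- x) = Defs.gnorm Gam x.
Proof.
apply: eq_big_seq => g g_in.
by rewrite characterN ?normr_cargV //; apply: Gam_char.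
Qed.

End Characters.

Section SmoothedBohrSet.
Variables (R : realType) (G : finZmodType) (Gam : seq (G -> R[i])) (delta : R).
Hypothesis Gam_char : forall g, g \in Gam -> is_character g.
Hypothesis delta_gt0 : 0 < delta.

Lemma bohr_smooth_ge0 x : 0 <= bohr_smooth Gam delta x.
Proof.
apply/fine_ge0/integral_ge0 => t _.
rewrite lee_fin !mulr_ge0 ?expR_ge0 ?invr_ge0 ?(ltW delta_gt0) //.
by rewrite /bohr; case: ifP.
Qed.

Lemma bohr_smoothN x : bohr_smooth Gam delta (- x) = bohr_smooth Gam delta x.
Proof. by rewrite /bohr_smooth /bohr gnormN. Qed.

(* At 0 the Bohr set indicator is 1 for all t >= 0, leaving the integral of the
   exponential density of rate 1/delta. *)
Lemma bohr_smooth0 : bohr_smooth Gam delta 0 = 1.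
Proof.
rewrite /bohr_smooth integral_mkcond.
rewrite (_ : _ \_ _ = fun t => (exponential_pdf delta^-1 t)%:E).
  by rewrite integral_exponential_pdf ?invr_gt0.
apply/funext => t; rewrite /exponential_pdf !patchE.
case: ifPn => //; rewrite inE /= in_itv /= andbT => t_ge0.
by rewrite /bohr gnorm0 // t_ge0 mul1r mulNr [t * _]mulrC.
Qed.

Let mass := \sum_y bohr_smooth Gam delta y.

Lemma bohr_smooth_mass_gt0 : 0 < mass.
Proof.
rewrite /mass (bigD1 0) //= bohr_smooth0.
by rewrite ltr_wpDr ?ltr01 ?sumr_ge0 // => y _; apply: bohr_smooth_ge0.
Qed.

Lemma beta_ge0 x : 0 <= beta_ Gam delta x.
Proof. by rewrite divr_ge0 ?bohr_smooth_ge0 ?ltW ?bohr_smooth_mass_gt0. Qed.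

Lemma sum_beta : \sum_x beta_ Gam delta x = 1.
Proof. by rewrite -mulr_suml divff // gt_eqF ?bohr_smooth_mass_gt0. Qed.

Lemma betaN x : beta_ Gam delta (- x) = beta_ Gam delta x.
Proof. by rewrite /beta_ bohr_smoothN. Qed.

End SmoothedBohrSet.

Section Convolution.
Variables (R : realType) (G : finZmodType).
Implicit Types (f g b : G -> R) (A B : {set G}).

Lemma sum_addr (F : G -> R) y : \sum_u F (u + y) = \sum_u F u.
Proof. by rewrite [RHS](reindex_inj (addIr y)). Qed.

Lemma gconv_ge0 f g : (forall x, 0 <= f x) -> (forall x, 0 <= g x) ->
  forall x, 0 <= gconv f g x.
Proof. by move=> f_ge0 g_ge0 x; apply: sumr_ge0 => y _; rewrite mulr_ge0. Qed.

Lemma sum_gconv f g : \sum_x gconv f g x = (\sum_x f x) * \sum_x g x.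
Proof.
rewrite exchange_big mulr_suml; apply: eq_bigr => y _.
by rewrite -mulr_sumr (sum_addr (fun u => g u) (- y)).
Qed.

Lemma gconv_sqr_sym f b : (forall x, b (- x) = b x) ->
  \sum_x f x * gconv f (gconv b b) x = \sum_u gconv f b u ^+ 2.
Proof.
move=> bN.
have bb_eq y w : \sum_v b v * b (w - y - v) = \sum_u b (u - y) * b (u - w).
  rewrite -(sum_addr (fun u => b (u - y) * b (u - w)) y); apply: eq_bigr => v _.
  by rewrite addrK; congr (_ * _); rewrite -bN !opprB addrA.
transitivity (\sum_w \sum_y \sum_u f w * f y * (b (u - y) * b (u - w))).
  apply: eq_bigr => w _; rewrite /gconv mulr_sumr; apply: eq_bigr => y _.
  by rewrite bb_eq !mulr_sumr; apply: eq_bigr => u _; ring.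
under eq_bigr => w _ do rewrite exchange_big.
rewrite exchange_big; apply: eq_bigr => u _ /=.
rewrite expr2 /gconv mulr_suml; apply: eq_bigr => w _.
by rewrite mulr_sumr; apply: eq_bigr => y _; ring.
Qed.

Lemma sum_ind A : \sum_x ind R A x = #|A|%:R.
Proof. by rewrite /ind -big_mkcond sumr_const. Qed.

Lemma ler_gconv_ind A B g : A \subset B -> (forall x, 0 <= g x) ->
  forall x, gconv (ind R A) g x <= gconv (ind R B) g x.
Proof.
move=> /fintype.subsetP AB g_ge0 x; apply: ler_sum => y _; rewrite ler_wpM2r //.
by rewrite /ind; case: ifPn => [/AB -> //|_]; case: ifP.
Qed.

End Convolution.

Lemma sqr_sum_le_card (R : realDomainType) (I : finType) (h : I -> R) :
  (\sum_i h i) ^+ 2 <= #|I|%:R * \sum_i h i ^+ 2.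
Proof.
set N : R := #|I|%:R; set k := \sum_i h i; set s2 := \sum_i h i ^+ 2.
have sum_const (c : R) : \sum_(i : I) c = N * c by rewrite sumr_const mulr_natl.
have row i : \sum_j (h i - h j) ^+ 2 = N * h i ^+ 2 - 2 * h i * k + s2.
  under eq_bigr => j _ do rewrite sqrrB.
  by rewrite !big_split /= sumrN sumrMnl sum_const -mulr_sumr -mulrA mulr_natl.
have : 0 <= \sum_i \sum_j (h i - h j) ^+ 2.
  by do 2![apply: sumr_ge0 => ? _]; apply: sqr_ge0.
rewrite (eq_bigr _ (fun i _ => row i)) !big_split /= sumrN -!mulr_sumr.
rewrite -mulr_suml -mulr_sumr !sum_const -/k -/s2.
rewrite (_ : _ + _ = 2 * (N * s2 - k ^+ 2)); last by ring.
by rewrite pmulr_rge0 ?ltr0n // subr_ge0.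
Qed.

Lemma card_small_gconv_le (R : realType) (G : finZmodType) (b : G -> R)
    (A : {set G}) (rho : R) :
  (forall x, 0 <= b x) -> \sum_x b x = 1 -> (forall x, b (- x) = b x) ->
  0 <= rho ->
  #|[set x in A | gconv (ind R A) (gconv b b) x <= rho]|%:R <= rho * #|G|%:R.
Proof.
move=> b_ge0 b_sum bN rho_ge0.
set S := [set x in A | _]; set psi := gconv b b.
have psi_ge0 : forall x, 0 <= psi x by apply: gconv_ge0.
have SA : S \subset A by apply/fintype.subsetP => x; rewrite inE => /andP[].
have energy_le : \sum_x ind R S x * gconv (ind R S) psi x <= rho * #|S|%:R.
  rewrite -sum_ind mulr_sumr; apply: ler_sum => x _; rewrite mulrC [ind R S x]/ind.
  case: ifPn => [xS|_]; rewrite ?mul0r ?mulr0 // !mulr1.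
  apply: le_trans (ler_gconv_ind SA psi_ge0 x) _.
  by move: xS; rewrite inE => /andP[].
have energy_ge := sqr_sum_le_card (gconv (ind R S) b).
rewrite sum_gconv sum_ind b_sum mulr1 -gconv_sqr_sym // in energy_ge.
have sqr_le : #|S|%:R ^+ 2 <= #|G|%:R * (rho * #|S|%:R) :> R.
  exact: le_trans energy_ge (ler_wpM2l (ler0n _ _) energy_le).
have [->|S_gt0] := posnP #|S|; first by rewrite mulr_ge0.
have S_pos : 0 < #|S|%:R :> R by rewrite ltr0n.
rewrite -(ler_pM2r S_pos) -expr2 (le_trans sqr_le) //.
by rewrite mulrA [_ * rho]mulrC.
Qed.

Theorem lemma7p2 (R : realType) (G : finZmodType) (A : {set G})
  (Gam : seq (G -> R[i])) (delta rho : R) :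
  (forall g, g \in Gam -> is_character g) ->
  0 < delta -> 0 < rho ->
  (#|[set x in A | gconv (ind R A) (psi_ Gam delta) x <= rho]|%:R
     <= rho * #|G|%:R :> R).
Proof.
move=> Gam_char delta_gt0 rho_gt0.
apply: card_small_gconv_le; rewrite ?ltW //.
- exact: beta_ge0.
- exact: sum_beta.
- exact: betaN.
Qed.
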